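(* Let $R$ be a commutative Noetherian ring with unity such that $\Gamma_E(R)$ has at least three vertices. Then $\Gamma_E(R)$ is not a complete graph.
   Context: For $x,y\in R$ write $x\sim y$ iff $\operatorname{ann}(x)=\operatorname{ann}(y)$; $[x]$ denotes the equivalence class of $x$. Let $Z^*(R)$ be the set of nonzero zero divisors of $R$. The graph $\Gamma_E(R)$ is the simple graph whose vertices are the classes $[x]$ with $x\in Z^*(R)$, two distinct vertices $[x],[y]$ being adjacent iff $xy=0$ (this is independent of representatives). *)

From mathcomp Require Import all_boot all_order all_algebra.
Set Implicit Arguments. Unset Strict Implicit. Unset Printing Implicit Defensive.
Import GRing.Theory.
Local Open Scope ring_scope.

Definition is_ideal (R : comPzRingType) (I : R -> Prop) : Prop :=
  [/\ I 0, (forall x y, I x -> I y -> I (x - y)) & (forall r x, I x -> I (r * x))].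

Definition noetherian (R : comPzRingType) : Prop :=
  forall I : nat -> R -> Prop,
    (forall n, is_ideal (I n)) ->
    (forall n x, I n x -> I n.+1 x) ->
    exists N, forall n, (N <= n)%N -> forall x, I n x <-> I N x.

Definition ann (R : comPzRingType) (x : R) : R -> Prop := fun r => x * r = 0.

Definition ann_equiv (R : comPzRingType) (x y : R) : Prop :=
  forall r, ann x r <-> ann y r.

Definition nz_zero_divisor (R : comPzRingType) (x : R) : Prop :=
  x <> 0 /\ exists y : R, y <> 0 /\ x * y = 0.

(* Gamma_E(R) has at least three vertices: three pairwise distinct classes
   [x],[y],[z] with x,y,z in Z*(R). *)
Definition GammaE_at_least_three_vertices (R : comPzRingType) : Prop :=
  exists x y z : R,
    [/\ nz_zero_divisor x, nz_zero_divisor y & nz_zero_divisor z] /\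
    [/\ ~ ann_equiv x y, ~ ann_equiv x z & ~ ann_equiv y z].

Definition GammaE_adj (R : comPzRingType) (x y : R) : Prop :=
  ~ ann_equiv x y /\ x * y = 0.

Definition GammaE_complete (R : comPzRingType) : Prop :=
  forall x y : R, nz_zero_divisor x -> nz_zero_divisor y ->
    ~ ann_equiv x y -> GammaE_adj x y.

From mathcomp Require Import all_boot all_order all_algebra.
From Stdlib Require Import Classical ClassicalEpsilon.
Set Implicit Arguments. Unset Strict Implicit.
Import GRing.Theory.
Local Open Scope ring_scope.

(* By the ascending chain condition there is a vertex [a] whose annihilator is
   maximal among annihilators of nonzero elements.  Every other vertex [u] then
   has [ann a] not contained in [ann u], so some [p] with [a p = 0] has
   [u p <> 0]; [p] is a vertex, and completeness of the graph forces [u ~ p]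
   or [u p = 0], both of which are impossible if [u^2 = 0].  Hence all vertices
   other than [a] have nonzero square.  With three vertices there are two
   vertices [u], [v] distinct from [a]; completeness gives [uv = ua = va = 0],
   so [u + v] is a vertex, and it is adjacent or equivalent to [u], giving
   [u^2 = 0] or [v^2 = 0] respectively. *)

Lemma ann_ideal (R : comPzRingType) (w : R) : is_ideal (ann w).
Proof.
rewrite /ann; split.
- by rewrite mulr0.
- by move=> x y hx hy; rewrite mulrBr hx hy subrr.
- by move=> r x hx; rewrite mulrCA hx mulr0.
Qed.

Lemma ann_equiv_sym (R : comPzRingType) (x y : R) :
  ann_equiv x y -> ann_equiv y x.
Proof. by move=> exy r; have := exy r; tauto. Qed.

Lemma ann_equiv_trans (R : comPzRingType) (x y z : R) :
  ann_equiv x y -> ann_equiv y z -> ann_equiv x z.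
Proof. by move=> exy eyz r; have := exy r; have := eyz r; tauto. Qed.

Lemma noetherian_maximal (R : comPzRingType) (T : Type) (P : T -> Prop)
    (F : T -> R -> Prop) :
  noetherian R -> (forall t, is_ideal (F t)) -> forall t0, P t0 ->
  exists t, P t /\ forall t', P t' ->
    (forall r, F t r -> F t' r) -> forall r, F t' r -> F t r.
Proof.
move=> hN hF t0 Pt0; apply: NNPP => nomax.
have step t : exists t', P t ->
    [/\ P t', forall r, F t r -> F t' r & ~ forall r, F t' r -> F t r].
  case: (classic (P t)) => [Pt|nPt]; last by exists t.
  apply: NNPP => nostep; apply: nomax; exists t; split=> // t' Pt' sub.
  by apply: NNPP => nsup; apply: nostep; exists t'.
have [f hf] := ClassicalEpsilon.choice _ step.
pose s n := iter n f t0.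
have Ps n : P (s n) by elim: n => [|n IH] //=; have [] := hf _ IH.
have chain n r : F (s n) r -> F (s n.+1) r.
  by have [_ sub _] := hf _ (Ps n); apply: sub.
have [N HN] := hN (F \o s) (fun n => hF (s n)) chain.
have [_ _] := hf _ (Ps N); apply=> r hr.
by have /(_ r) [stable _] := HN N.+1 (leqnSn N); apply: stable.
Qed.

Definition maximal_ann (R : comPzRingType) (a : R) : Prop :=
  a <> 0 /\ forall w, w <> 0 ->
    (forall r, ann a r -> ann w r) -> forall r, ann w r -> ann a r.

Lemma exists_maximal_ann (R : comPzRingType) (x : R) :
  noetherian R -> x <> 0 -> exists a : R, maximal_ann a.
Proof.
move=> hN hx.
have [a [ha amax]] :=
  noetherian_maximal (P := fun w : R => w <> 0) hN (@ann_ideal R) hx.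
by exists a.
Qed.

Lemma maximal_ann_witness (R : comPzRingType) (a u : R) :
  maximal_ann a -> u <> 0 -> ~ ann_equiv u a ->
  exists p, a * p = 0 /\ u * p <> 0.
Proof.
move=> [_ amax] hu nua; apply: NNPP => nop.
have sub r : ann a r -> ann u r.
  by move=> har; apply: NNPP => nur; apply: nop; exists r.
by apply: nua => r; split=> [/(amax u hu sub)|/sub].
Qed.

Lemma maximal_ann_zero_divisor (R : comPzRingType) (a u : R) :
  maximal_ann a -> u <> 0 -> ~ ann_equiv u a -> nz_zero_divisor a.
Proof.
move=> ha hu nua; have [p [hap hup]] := maximal_ann_witness ha hu nua.
split; first exact: ha.1.
by exists p; split=> // p0; apply: hup; rewrite p0 mulr0.
Qed.

Lemma two_ann_inequiv_avoiding (R : comPzRingType) (P : R -> Prop) (x y z a : R) :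
  [/\ P x, P y & P z] -> [/\ ~ ann_equiv x y, ~ ann_equiv x z & ~ ann_equiv y z] ->
  exists u v, [/\ P u, P v, ~ ann_equiv u v, ~ ann_equiv u a & ~ ann_equiv v a].
Proof.
move=> [Px Py Pz] [nxy nxz nyz].
have equiv_a s t : ann_equiv s a -> ann_equiv t a -> ann_equiv s t.
  by move=> esa eta; apply: ann_equiv_trans esa (ann_equiv_sym eta).
case: (classic (ann_equiv x a)) => xa.
  by exists y, z; split=> // [ya|za]; [apply: nxy | apply: nxz]; apply: equiv_a.
case: (classic (ann_equiv y a)) => ya; last by exists x, y.
by exists x, z; split=> // za; apply: nyz; apply: equiv_a.
Qed.

Section CompleteGraph.

Variable R : comPzRingType.
Hypothesis complete : GammaE_complete R.
Variable a : R.
Hypothesis a_max : maximal_ann a.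

Lemma complete_sqr_neq0 (u : R) :
  nz_zero_divisor u -> ~ ann_equiv u a -> u * u <> 0.
Proof.
move=> hu nua uu0; have [p [hap hup]] := maximal_ann_witness a_max hu.1 nua.
have hp : nz_zero_divisor p.
  split; first by move=> p0; apply: hup; rewrite p0 mulr0.
  by exists a; split; [exact: a_max.1 | rewrite mulrC].
case: (classic (ann_equiv u p)) => [eup|nup]; last exact: hup (complete hu hp nup).2.
by apply: hup; rewrite mulrC; apply/(eup u).
Qed.

Lemma complete_no_two_vertices_avoiding (u v : R) :
  nz_zero_divisor u -> nz_zero_divisor v -> ~ ann_equiv u v ->
  ~ ann_equiv u a -> ~ ann_equiv v a -> False.
Proof.
move=> hu hv nuv nua nva.
have uu0 := complete_sqr_neq0 hu nua; have vv0 := complete_sqr_neq0 hv nva.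
have ha := maximal_ann_zero_divisor a_max hu.1 nua.
have [_ uv0] := complete hu hv nuv.
have [_ ua0] := complete hu ha nua; have [_ va0] := complete hv ha nva.
have hw : nz_zero_divisor (u + v).
  split; last by exists a; split; [exact: ha.1 | rewrite mulrDl ua0 va0 addr0].
  by move=> w0; apply: uu0; rewrite -[u * u]addr0 -uv0 -mulrDr w0 mulr0.
case: (classic (ann_equiv (u + v) u)) => [ewu|nwu].
  by apply: vv0; have /(ewu v).2 := uv0; rewrite /ann mulrDl uv0 add0r.
have [_ wu0] := complete hw hu nwu.
by apply: uu0; move: wu0; rewrite mulrDl [v * u]mulrC uv0 addr0.
Qed.

End CompleteGraph.

Theorem proposition1p5 (R : comPzRingType) :
  noetherian R -> GammaE_at_least_three_vertices R -> ~ GammaE_complete R.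
Proof.
move=> hN [x [y [z [vert inequiv]]]] complete.
have [[x_neq0 _] _ _] := vert.
have [a a_max] := exists_maximal_ann hN x_neq0.
have [u [v [hu hv nuv nua nva]]] :=
  two_ann_inequiv_avoiding (P := @nz_zero_divisor R) a vert inequiv.
exact: (complete_no_two_vertices_avoiding complete a_max hu hv nuv nua nva).
Qed.
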